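(* Let $c_{\min}\le c_{\max}$ and $d_{\min}\le d_{\max}$ be integers, $T=\{c_{\min},\dots,c_{\max}\}\times\{d_{\min},\dots,d_{\max}\}$, $a:T\to[0,1]$ and $p:T\to\mathbb{R}$. For $(c,d),(c',d')\in T$ write $(c,d)\to(c',d')$ for the inequality $p_{c,d}-c\,a_{c,d}\ge p_{c',d'}-c\,a_{c',d'}$. Assume $a$ is monotonic: $a_{c,d}\ge a_{c',d'}$ whenever $c\le c'$ and $d\ge d'$. Suppose that for every $(c,d)\in T$ the adjacent constraints hold: $(c,d)\to(c+1,d)$ if $c<c_{\max}$, $(c,d)\to(c-1,d)$ if $c>c_{\min}$, and $(c,d)\to(c,d-1)$ if $d>d_{\min}$. Then for every $(c,d)\in T$: $(c,d)\to(c',d)$ holds for every $c'\in\{c_{\min},\dots,c_{\max}\}$, and $(c,d)\to(c,d')$ holds for every $d'\in\{d_{\min},\dots,d\}$.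
   Context: $a_{c,d}$ is the interim winning probability and $p_{c,d}$ the expected payment of a bidder reporting type $(c,d)$ (cost $c$, predicted path duration $d$); a bidder of true cost $c$ winning with probability $a$ has expected cost $c\,a$. The inequality $(c,d)\to(c',d')$ is the incentive-compatibility constraint for a bidder of true type $(c,d)$ misreporting $(c',d')$. The ''adjacent'' constraints are those where the report differs from the true type by one unit in one coordinate. *)

From Stdlib Require Import Reals ZArith Lra Lia.
Open Scope R_scope.

Definition inT (cmin cmax dmin dmax c d : Z) : Prop :=
  (cmin <= c <= cmax)%Z /\ (dmin <= d <= dmax)%Z.

Definition ic (a p : Z -> Z -> R) (c d c' d' : Z) : Prop :=
  p c d - IZR c * a c d >= p c' d' - IZR c * a c' d'.

(* Any two adjacent constraints (c,d) -> (c1,d1) -> (c2,d2) compose to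
   (c,d) -> (c2,d2) up to the error term (c1 - c)(a_{c1,d1} - a_{c2,d2}).
   Walking along a row away from c, monotonicity of a makes this term
   nonnegative at every step; walking down a column the cost is fixed, so it
   vanishes. *)

From Stdlib Require Import Reals ZArith Lra Lia.
Open Scope R_scope.

Lemma Z_bounded_ind_up (P : Z -> Prop) (lo hi : Z) :
  P lo -> (forall x, (lo <= x < hi)%Z -> P x -> P (x + 1)%Z) ->
  forall x, (lo <= x <= hi)%Z -> P x.
Proof.
  intros Hlo Hstep x Hx.
  assert (Hk : forall k, (0 <= k)%Z -> (lo + k <= hi)%Z -> P (lo + k)%Z).
  { apply (natlike_ind (fun k => (lo + k <= hi)%Z -> P (lo + k)%Z)).
    - now rewrite Z.add_0_r.
    - intros k Hk IH Hle.
      replace (lo + Z.succ k)%Z with (lo + k + 1)%Z by lia.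
      apply Hstep; [lia | apply IH; lia]. }
  replace x with (lo + (x - lo))%Z by lia.
  apply Hk; lia.
Qed.

Lemma Z_bounded_ind_down (P : Z -> Prop) (lo hi : Z) :
  P hi -> (forall x, (lo < x <= hi)%Z -> P x -> P (x - 1)%Z) ->
  forall x, (lo <= x <= hi)%Z -> P x.
Proof.
  intros Hhi Hstep x Hx.
  assert (Hk : forall k, (0 <= k)%Z -> (lo <= hi - k)%Z -> P (hi - k)%Z).
  { apply (natlike_ind (fun k => (lo <= hi - k)%Z -> P (hi - k)%Z)).
    - now rewrite Z.sub_0_r.
    - intros k Hk IH Hle.
      replace (hi - Z.succ k)%Z with (hi - k - 1)%Z by lia.
      apply Hstep; [lia | apply IH; lia]. }
  replace x with (hi - (hi - x))%Z by lia.
  apply Hk; lia.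
Qed.

Section Chaining.

Variables a p : Z -> Z -> R.

Lemma ic_refl c d : ic a p c d c d.
Proof. unfold ic; lra. Qed.

Lemma ic_trans c d c1 d1 c2 d2 :
  ic a p c d c1 d1 -> ic a p c1 d1 c2 d2 ->
  0 <= (IZR c1 - IZR c) * (a c1 d1 - a c2 d2) ->
  ic a p c d c2 d2.
Proof. unfold ic; nra. Qed.

Lemma ic_trans_same_cost c d d1 d2 :
  ic a p c d c d1 -> ic a p c d1 c d2 -> ic a p c d c d2.
Proof.
  intros H1 H2; apply (ic_trans _ _ _ _ _ _ H1 H2).
  rewrite Rminus_diag, Rmult_0_l; apply Rle_refl.
Qed.

Lemma ic_trans_cost_up c d x :
  (c <= x)%Z -> a (x + 1)%Z d <= a x d ->
  ic a p c d x d -> ic a p x d (x + 1)%Z d -> ic a p c d (x + 1)%Z d.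
Proof.
  intros Hcx Ha H1 H2; apply (ic_trans _ _ _ _ _ _ H1 H2).
  assert (IZR c <= IZR x) by (apply IZR_le; exact Hcx); nra.
Qed.

Lemma ic_trans_cost_down c d x :
  (x <= c)%Z -> a x d <= a (x - 1)%Z d ->
  ic a p c d x d -> ic a p x d (x - 1)%Z d -> ic a p c d (x - 1)%Z d.
Proof.
  intros Hxc Ha H1 H2; apply (ic_trans _ _ _ _ _ _ H1 H2).
  assert (IZR x <= IZR c) by (apply IZR_le; exact Hxc); nra.
Qed.

End Chaining.

Section TypeSpace.

Variables (cmin cmax dmin dmax : Z) (a p : Z -> Z -> R).

Hypothesis Hmono : forall c d c' d', inT cmin cmax dmin dmax c d -> inT cmin cmax dmin dmax c' d' ->
  (c <= c')%Z -> (d' <= d)%Z -> a c d >= a c' d'.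
Hypothesis Hup : forall c d, inT cmin cmax dmin dmax c d -> (c < cmax)%Z -> ic a p c d (c + 1)%Z d.
Hypothesis Hdown : forall c d, inT cmin cmax dmin dmax c d -> (cmin < c)%Z -> ic a p c d (c - 1)%Z d.
Hypothesis Hdd : forall c d, inT cmin cmax dmin dmax c d -> (dmin < d)%Z -> ic a p c d c (d - 1)%Z.

Lemma ic_cost_up c d : inT cmin cmax dmin dmax c d ->
  forall c', (c <= c' <= cmax)%Z -> ic a p c d c' d.
Proof.
  intros [Hc Hd]; apply Z_bounded_ind_up; [apply ic_refl |].
  intros x Hx IH; apply ic_trans_cost_up; [lia | | exact IH |].
  - apply Rge_le, Hmono; unfold inT; lia.
  - apply Hup; [unfold inT |]; lia.
Qed.

Lemma ic_cost_down c d : inT cmin cmax dmin dmax c d ->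
  forall c', (cmin <= c' <= c)%Z -> ic a p c d c' d.
Proof.
  intros [Hc Hd]; apply Z_bounded_ind_down; [apply ic_refl |].
  intros x Hx IH; apply ic_trans_cost_down; [lia | | exact IH |].
  - apply Rge_le, Hmono; unfold inT; lia.
  - apply Hdown; [unfold inT |]; lia.
Qed.

Lemma ic_duration_down c d : inT cmin cmax dmin dmax c d ->
  forall d', (dmin <= d' <= d)%Z -> ic a p c d c d'.
Proof.
  intros [Hc Hd]; apply Z_bounded_ind_down; [apply ic_refl |].
  intros y Hy IH; apply (ic_trans_same_cost _ _ _ _ _ _ IH).
  apply Hdd; [unfold inT |]; lia.
Qed.

End TypeSpace.

Theorem lemma2 (cmin cmax dmin dmax : Z) (a p : Z -> Z -> R)
  (Hc : (cmin <= cmax)%Z) (Hd : (dmin <= dmax)%Z)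
  (Ha01 : forall c d, inT cmin cmax dmin dmax c d -> 0 <= a c d <= 1)
  (Hmono : forall c d c' d', inT cmin cmax dmin dmax c d ->
      inT cmin cmax dmin dmax c' d' -> (c <= c')%Z -> (d' <= d)%Z ->
      a c d >= a c' d')
  (Hup : forall c d, inT cmin cmax dmin dmax c d -> (c < cmax)%Z ->
      ic a p c d (c + 1)%Z d)
  (Hdown : forall c d, inT cmin cmax dmin dmax c d -> (cmin < c)%Z ->
      ic a p c d (c - 1)%Z d)
  (Hdd : forall c d, inT cmin cmax dmin dmax c d -> (dmin < d)%Z ->
      ic a p c d c (d - 1)%Z) :
  forall c d, inT cmin cmax dmin dmax c d ->
    (forall c', (cmin <= c' <= cmax)%Z -> ic a p c d c' d) /\
    (forall d', (dmin <= d' <= d)%Z -> ic a p c d c d').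
Proof.
  intros c d HT; split.
  - intros c' Hc'; destruct (Z.le_gt_cases c c').
    + apply (ic_cost_up cmin cmax dmin dmax); auto; lia.
    + apply (ic_cost_down cmin cmax dmin dmax); auto; lia.
  - exact (ic_duration_down cmin cmax dmin dmax a p Hdd c d HT).
Qed.
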